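(* Let $S\subset\mathcal P$ be finite and let $\Delta$ be a bounded region of $\mathcal L_S$ with $n$ sides, with $P_k$ and $D_k$ ($k\in\mathbb{Z}/n\mathbb{Z}$) as in the context. If $D_k=D_{k+1}$, then $\overleftrightarrow{P_kP_{k+1}}\cap S=\overline{P_kP_{k+1}}\cap S$ (the full line through $P_k,P_{k+1}$ meets $S$ only within the closed segment between them). If $D_k\neq D_{k+1}$, then $\overline{P_kP_{k+1}}\cap S=\{P_k,P_{k+1}\}$.
   Context: $\mathcal P=\mathbb{R}^2\setminus\{(0,0)\}$; for $P=(A,B)\in\mathcal P$, $L_P$ is the line $Ax+By=1$ in $\mathbb{R}^2$; $\mathcal L_S=\{L_P\mid P\in S\}$; $O$ is the origin. For finite $S$, the regions of $\mathcal L_S$ are the closures of the connected components of $\mathbb{R}^2\setminus\bigcup_{P\in S}L_P$. For a bounded region $\Delta$ with $n$ sides, $L_k$ ($k\in\mathbb{Z}/n\mathbb{Z}$) are the lines containing the sides of $\Delta$ in clockwise order around $\Delta$, $P_k\in S$ is the point with $L_{P_k}=L_k$, and $D_k\in\{l,r\}$ is the side (left or right) of $L_k$ on which $O$ lies for a traveller moving along the side of $\Delta$ on $L_k$ clockwise around $\Delta$ (with $\Delta$ on the traveller's right). $\overleftrightarrow{XY}$ denotes the line and $\overline{XY}$ the closed segment through $X,Y$. *)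

From HB Require Import structures.
From mathcomp Require Import all_boot all_order all_algebra.
From mathcomp Require Import all_classical all_reals all_analysis.
Set Implicit Arguments. Unset Strict Implicit. Unset Printing Implicit Defensive.
Import Order.TTheory GRing.Theory Num.Theory.
Import numFieldNormedType.Exports.
Local Open Scope classical_set_scope.
Local Open Scope ring_scope.

Section Defs.
Variable R : realType.
Notation pt := (R * R)%type.

Definition origin : pt := (0, 0).

Definition lineL (P : pt) : set pt := [set X | P.1 * X.1 + P.2 * X.2 = 1].

Definition arr_union (S : set pt) : set pt := \bigcup_(P in S) lineL P.

Definition is_region (S : set pt) (D : set pt) : Prop :=
  exists x, (~` arr_union S) x /\ D = @closure (R * R)%type (@connected_component (R * R)%type (~` arr_union S) x).

Definition bounded2 (D : set pt) : Prop :=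
  exists M : R, forall X, D X -> `|X.1| <= M /\ `|X.2| <= M.

Definition cross (u v : pt) : R := u.1 * v.2 - u.2 * v.1.
Definition psub (u v : pt) : pt := (u.1 - v.1, u.2 - v.2).

(* V : 'I_n -> pt lists the vertices of a convex polygon in clockwise order:
   every other vertex lies strictly to the right of each directed side V_k -> V_{k+1} *)
Definition clockwise_convex n (V : 'I_n -> pt) : Prop :=
  forall k j : 'I_n, j != k -> j != ordS k ->
    cross (psub (V (ordS k)) (V k)) (psub (V j) (V k)) < 0.

Definition polygon n (V : 'I_n -> pt) : set pt :=
  [set X | forall k : 'I_n, cross (psub (V (ordS k)) (V k)) (psub X (V k)) <= 0].

Definition line_through (U W : pt) : set pt :=
  [set X | exists t : R, X = (U.1 + t * (W.1 - U.1), U.2 + t * (W.2 - U.2))].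

Definition segment (U W : pt) : set pt :=
  [set X | exists2 t : R, 0 <= t <= 1 & X = (U.1 + t * (W.1 - U.1), U.2 + t * (W.2 - U.2))].

Inductive side := Left | Right.

(* D_k: the side (for a traveller going from V_k to V_{k+1}) on which O lies *)
Definition Dside n (V : 'I_n -> pt) (k : 'I_n) : side :=
  if 0 < cross (psub (V (ordS k)) (V k)) (psub origin (V k)) then Left else Right.

End Defs.

(** Write [p = P k], [q = P (k+1)], and let [a = V k] on [L_p] and
    [e = V (k+2)] on [L_q].  A point [X = p + t (q - p)] gives the affine form
    [Y |-> X.Y - 1 = (1-t) (p.Y - 1) + t (q.Y - 1)], whose values at [a] and
    [e] are [t B] and [(1-t) A], with [A = p.e - 1] and [B = q.a - 1].
    As [Delta] is the closure of a component of the complement of the lines,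
    it lies on one side of [L_X] when [X] is in [S]; since [a] and [e] are in
    [Delta], this gives [t (1-t) A B >= 0].  Because [e] lies strictly on the
    region's side of [L_p], [A] has the sign of the cross product defining
    [D_k], and likewise [B] for [D_(k+1)].  So [A B > 0] when [D_k = D_(k+1)],
    forcing [0 <= t <= 1], and [A B < 0] otherwise, forcing [t (1-t) = 0] on
    the segment. *)

From mathcomp Require Import all_boot all_order all_algebra.
From mathcomp Require Import all_classical all_reals all_analysis.
From mathcomp Require Import zify ring lra.
Set Implicit Arguments. Unset Strict Implicit. Unset Printing Implicit Defensive.
Import Order.TTheory GRing.Theory Num.Theory.
Import numFieldNormedType.Exports.
Local Open Scope classical_set_scope.
Local Open Scope ring_scope.

Lemma closure_connected_component_sign (R : realType) (T : topologicalType)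
    (A : set T) (f : T -> R) (x : T) :
  continuous f -> A x -> (forall y, A y -> f y != 0) ->
  closure (connected_component A x) `<=` [set y | 0 <= f x * f y].
Proof.
move=> fC Ax fA.
set C := connected_component A x.
set g := fun y => f x * f y.
have gC : continuous g by move=> y; apply: cvgM; [exact: cvg_cst | exact: fC].
have closed_nonneg : closed (g @^-1` [set z | 0 <= z]).
  by move/continuous_closedP: gC; apply; exact: closed_ge.
have Cpos : C `<=` [set y | 0 < g y].
  suff -> : C = C `&` [set y | 0 < g y] by move=> y [].
  apply/esym/component_connected.
  - by exists x; split; [exact: connected_component_refl | rewrite /g /= -expr2 lt0r sqrf_eq0 fA // sqr_ge0].
  - by exists (g @^-1` [set z | 0 < z]) => //; apply: open_comp => // y _; exact: gC.
  - exists (g @^-1` [set z | 0 <= z]) => //.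
    apply/seteqP; split=> y [Cy gy]; split=> //=; first exact: ltW.
    by rewrite lt_neqAle eq_sym gy andbT mulf_neq0 ?fA //; exact: connected_component_sub Cy.
move=> y /(closureS (fun z Cz => ltW (Cpos z Cz))).
by rewrite -(closure_id _).1.
Qed.

Section Plane.
Context {R : realType}.
Notation pt := (R * R)%type.

Definition lin_form (Q X : pt) : R := Q.1 * X.1 + Q.2 * X.2 - 1.

Definition lerp (U W : pt) (t : R) : pt :=
  (U.1 + t * (W.1 - U.1), U.2 + t * (W.2 - U.2)).

Lemma lineLE (Q X : pt) : lineL Q X <-> lin_form Q X = 0.
Proof.
rewrite /lineL /lin_form /=; split=> [->|/eqP]; first by rewrite subrr.
by rewrite subr_eq0 => /eqP.
Qed.

Lemma continuous_lin_form (Q : pt) : continuous (lin_form Q).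
Proof.
move=> X; apply: cvgB; last exact: cvg_cst.
by apply: cvgD; apply: cvgM; [exact: cvg_cst | exact: cvg_fst | exact: cvg_cst | exact: cvg_snd].
Qed.

Lemma region_lin_form_sign (S D : set pt) (Q Y Z : pt) :
  is_region S D -> S Q -> D Y -> D Z -> 0 <= lin_form Q Y * lin_form Q Z.
Proof.
move=> [x [Ax ->]] SQ.
have offL X : (~` arr_union S) X -> lin_form Q X != 0.
  by move=> AX; apply/eqP => /lineLE LX; apply: AX; exists Q.
have side := closure_connected_component_sign (continuous_lin_form (Q := Q)) Ax offL.
move=> /side /= hY /side /= hZ.
have := mulr_ge0 hY hZ.
rewrite mulrACA -expr2 pmulr_rge0 // lt0r sqrf_eq0 sqr_ge0 andbT.
exact: offL.
Qed.

Lemma lerp0 (U W : pt) : lerp U W 0 = U.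
Proof. by rewrite /lerp !mul0r !addr0; case: U. Qed.

Lemma lerp1 (U W : pt) : lerp U W 1 = W.
Proof. by rewrite /lerp !mul1r !(addrC U.1) !(addrC U.2) !subrK; case: W. Qed.

Lemma lin_form_lerp (U W Y : pt) (t : R) :
  lin_form (lerp U W t) Y = (1 - t) * lin_form U Y + t * lin_form W Y.
Proof. by rewrite /lin_form /lerp /=; ring. Qed.

Lemma lin_form_line_through (Q U W : pt) :
  lineL Q = line_through U W -> lin_form Q U = 0 /\ lin_form Q W = 0.
Proof.
move=> LQ; split; apply/lineLE; rewrite LQ.
  by exists 0; rewrite -[LHS](lerp0 U W).
by exists 1; rewrite -[LHS](lerp1 U W).
Qed.

(* [cross (W - U) (Y - U)] is an affine form in [Y] vanishing on [L_Q], hence a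
   multiple of [lin_form Q]; evaluating at the origin gives the factor. *)
Lemma lin_form_cross (Q U W Y : pt) :
  lin_form Q U = 0 -> lin_form Q W = 0 ->
  lin_form Q Y * cross (psub W U) (psub (origin R) U) = - cross (psub W U) (psub Y U).
Proof.
move=> hU hW; apply/eqP; rewrite -subr_eq0 opprK; apply/eqP.
transitivity (lin_form Q U * (cross (psub W U) (psub (origin R) U) - cross (psub W U) (psub Y U))
  + (lin_form Q W - lin_form Q U) * ((Y.1 - U.1) * - U.2 - (Y.2 - U.2) * - U.1)).
  by rewrite /lin_form /cross /psub /origin /=; ring.
by rewrite hU hW subrr !mul0r addr0.
Qed.

Lemma line_through_setI_segment (S : set pt) (U W : pt) :
  (forall t, S (lerp U W t) -> 0 <= t * (1 - t)) ->
  line_through U W `&` S = segment U W `&` S.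
Proof.
move=> inside; apply/seteqP; split=> X [XL SX]; split=> //.
  case: XL => t Xt; exists t => //; move: SX; rewrite Xt => /inside.
  by apply: contraTT; rewrite negb_and -!ltNge; nra.
by case: XL => t _ ->; exists t.
Qed.

Lemma segment_setI_endpoints (S : set pt) (U W : pt) :
  S U -> S W -> (forall t, S (lerp U W t) -> t * (1 - t) <= 0) ->
  segment U W `&` S = [set U; W].
Proof.
move=> SU SW outside; apply/seteqP; split.
  move=> X [[t /andP[t0 t1] ->]]; rewrite -/(lerp U W t) => /outside tt.
  have [->|t_neq0] := eqVneq t 0; first by left; rewrite lerp0.
  have [->|t_neq1] := eqVneq t 1; first by right; rewrite lerp1.
  suff : 0 < t * (1 - t) by rewrite ltNge tt.
  by rewrite mulr_gt0 // ?subr_gt0 lt_neqAle ?t_neq1 ?t1 // eq_sym t_neq0.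
move=> X [->|->]; split=> //.
  by exists 0; [rewrite lexx ler01 | rewrite -[LHS](lerp0 U W)].
by exists 1; [rewrite lexx ler01 | rewrite -[LHS](lerp1 U W)].
Qed.

Lemma polygon_vertex n (V : 'I_n -> pt) (i : 'I_n) :
  clockwise_convex V -> polygon V (V i).
Proof.
move=> cc j; have [->|ij] := eqVneq i j.
  by rewrite /cross /psub !subrr !mulr0 subrr.
have [->|iSj] := eqVneq i (ordS j).
  by rewrite /cross /psub /= [X in _ - X]mulrC subrr.
by apply/ltW/cc; rewrite // eq_sym.
Qed.

Lemma mulr_gt0_sign (x y : R) : 0 < x * y -> (0 < x) = (0 < y).
Proof.
case: (ltgtP 0 y) => [y_gt0|y_lt0|<-]; first by rewrite pmulr_lgt0.
  by rewrite nmulr_lgt0 // => x_lt0; rewrite (lt_gtF x_lt0).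
by rewrite mulr0 ltxx.
Qed.

Lemma Dside_sign n (V : 'I_n -> pt) (k l : 'I_n) (A B : R) :
  0 < A * cross (psub (V (ordS k)) (V k)) (psub (origin R) (V k)) ->
  0 < B * cross (psub (V (ordS l)) (V l)) (psub (origin R) (V l)) ->
  (Dside V k = Dside V l -> 0 < A * B) /\ (Dside V k <> Dside V l -> A * B < 0).
Proof.
move=> sA sB; rewrite /Dside -(mulr_gt0_sign sA) -(mulr_gt0_sign sB).
have sign (x c : R) : 0 < x * c -> x < 0 \/ 0 < x.
  by move=> sx; apply/orP; rewrite -neq_lt; apply: contraTneq sx => ->; rewrite mul0r ltxx.
case: (sign _ _ sA) => hA; case: (sign _ _ sB) => hB;
  rewrite ?hA ?hB ?(lt_gtF hA) ?(lt_gtF hB); split=> // _; clear sign sA sB; nra.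
Qed.

End Plane.

Lemma ordS_neq n (k : 'I_n) : (2 <= n)%N -> ordS k != k.
Proof.
move=> n2; rewrite -val_eqE /=; have := ltn_ord k.
by rewrite leq_eqVlt => /orP[/eqP e|lt]; [rewrite e modnn; lia | rewrite modn_small //; lia].
Qed.

Lemma ordS2_neq n (k : 'I_n) : (3 <= n)%N -> ordS (ordS k) != k.
Proof.
move=> n3; rewrite -val_eqE /=; have := ltn_ord k.
rewrite leq_eqVlt => /orP[/eqP e|lt]; first by rewrite e modnn modn_small; lia.
rewrite (modn_small lt); move: lt; rewrite leq_eqVlt => /orP[/eqP e|lt].
  by rewrite e modnn; lia.
by rewrite modn_small //; lia.
Qed.

Theorem lemma3p9 (R : realType) (S : set (R * R)%type)
  (Delta : set (R * R)%type) (n : nat) (V : 'I_n -> (R * R)%type)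
  (P : 'I_n -> (R * R)%type) :
  finite_set S ->
  S `<=` [set X | X != origin R] ->
  is_region S Delta -> bounded2 Delta ->
  (3 <= n)%N ->
  clockwise_convex V -> Delta = polygon V ->
  (forall k : 'I_n, S (P k) /\ lineL (P k) = line_through (V k) (V (ordS k))) ->
  forall k : 'I_n,
    (Dside V k = Dside V (ordS k) ->
       line_through (P k) (P (ordS k)) `&` S = segment (P k) (P (ordS k)) `&` S) /\
    (Dside V k <> Dside V (ordS k) ->
       segment (P k) (P (ordS k)) `&` S = [set P k; P (ordS k)]).
Proof.
move=> _ _ region _ n3 cc DP HP k.
have n2 : (2 <= n)%N by lia.
have [Sp /lin_form_line_through[pa pb]] := HP k.
have [Sq /lin_form_line_through[qb qe]] := HP (ordS k).
set A := lin_form (P k) (V (ordS (ordS k))).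
set B := lin_form (P (ordS k)) (V k).
have inD i : Delta (V i) by rewrite DP; exact: polygon_vertex.
have key t : S (lerp (P k) (P (ordS k)) t) -> 0 <= t * (1 - t) * (A * B).
  move=> SX; have := region_lin_form_sign region SX (inD k) (inD (ordS (ordS k))).
  by rewrite !lin_form_lerp pa qe; congr (0 <= _); rewrite /A /B; ring.
have sA : 0 < A * cross (psub (V (ordS k)) (V k)) (psub (origin R) (V k)).
  by rewrite lin_form_cross // oppr_gt0 cc ?ordS2_neq ?ordS_neq.
have sB : 0 < B * cross (psub (V (ordS (ordS k))) (V (ordS k))) (psub (origin R) (V (ordS k))).
  by rewrite lin_form_cross // oppr_gt0 cc // eq_sym ?ordS_neq ?ordS2_neq.
have [same diff] := Dside_sign sA sB.
split=> [/same AB | /diff AB].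
- by apply: line_through_setI_segment => t /key; rewrite pmulr_lge0.
- by apply: segment_setI_endpoints => // t /key; rewrite nmulr_lge0.
Qed.
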